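(* Assume $p\nmid a$, and let $u=a^{-1}-\frac{y^{q^a}}{x}-\frac{y^{q}}{x^{q^a}}$, $w=\frac{y^{q^a}}{xu}$, $z=\frac{y}{x^{q^b}}$ in $F$. Then $\mathrm{Div}(u)=(q^c-1)P_1-N_cV$, $\mathrm{Div}(z)=-q^{b-1}N_cV+(q^c-1)Q$, and $\mathrm{Div}(w)=(q^c-1)P_0-(q^{a-1}-1)N_cV$.
   Context: Let $p$ be a prime, $q$ a power of $p$, $b\ge1$ an integer, $a=b+1$, $c=a+b$. $N_k=(q^k-1)/(q-1)$, $\mathrm{Tr}_k(X)=X+X^q+\dots+X^{q^{k-1}}$. $F=\mathbb{F}_{q^c}(x,y)$ with $\mathrm{Tr}_b(y^{q^a}/x)+\mathrm{Tr}_a(y/x^{q^b})=1$. $P$ (resp. $Q$, $V$) is the sum of all places of $F$ where $x,y$ both have positive valuation (resp. both negative; resp. $x$ positive, $y$ negative). Known: $\mathrm{Div}(x)=P+q^{a-1}N_bV-q^aQ$, $\mathrm{Div}(y)=q^bP-q^{b-1}N_aV-Q$, $\deg P=q^{a-1}$, $\deg Q=q^{b-1}$, $\deg V=q-1$. When $p\nmid a$, $P_1$ denotes the unique rational place in the support of $P$, namely the one where $x^{-q^b}y$ has residue $a^{-1}$; it occurs in $P$ with multiplicity one, and $P_0:=P-P_1$ (so $\deg P_0=q^{a-1}-1$). *)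

From HB Require Import structures.
From mathcomp Require Import all_boot all_order all_algebra.
Set Implicit Arguments. Unset Strict Implicit. Unset Printing Implicit Defensive.
Import Order.TTheory GRing.Theory Num.Theory.
Local Open Scope ring_scope.

(* The subfield F_{Q} of F (Q a power of the characteristic): roots of X^Q - X. *)
Definition Fsub (F : fieldType) (Q : nat) : pred F := fun k => k ^+ Q == k.

(* A normalized discrete valuation of F trivial on the constant field K.
   Places of the function field F/K correspond bijectively to these.
   The value at 0 is irrelevant (never used). *)
Record dvaluation (F : fieldType) (K : pred F) := DValuation {
  vfun :> F -> int;
  vM : forall s t, s != 0 -> t != 0 -> vfun (s * t) = vfun s + vfun t;
  vD : forall s t, s != 0 -> t != 0 -> s + t != 0 ->
         (vfun s <= vfun (s + t)) || (vfun t <= vfun (s + t));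
  vsurj : forall n : int, exists2 s, s != 0 & vfun s = n;
  vK : forall k, K k -> k != 0 -> vfun k = 0
}.

Definition subfield_closed (F : fieldType) (S : pred F) :=
  S 1 /\ forall s t, S s -> S t -> [/\ S (s - t), S (s * t) & S s^-1].

Definition generated_by (F : fieldType) (K : pred F) (x y : F) :=
  forall S : pred F, subfield_closed S -> (forall k, K k -> S k) ->
    S x -> S y -> forall f, S f.

Definition Tr (F : fieldType) (q k : nat) (X : F) : F := \sum_(i < k) X ^+ (q ^ i).

Definition Nq (q k : nat) : nat := ((q ^ k - 1) %/ (q - 1))%N.

Definition ind (c : bool) : int := if c then 1 else 0.

Definition residue_is (F : fieldType) (K : pred F) (v : dvaluation K) (f c : F) :=
  (f - c == 0) || (0 < v (f - c)).

Definition inP F K (v : @dvaluation F K) (x y : F) := (0 < v x) && (0 < v y).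
Definition inQ F K (v : @dvaluation F K) (x y : F) := (v x < 0) && (v y < 0).
Definition inV F K (v : @dvaluation F K) (x y : F) := (0 < v x) && (v y < 0).
Definition inP1 F K (v : @dvaluation F K) (q a b : nat) (x y : F) :=
  inP v x y && residue_is v (y / x ^+ (q ^ b)) (a%:R)^-1.
Definition inP0 F K (v : @dvaluation F K) (q a b : nat) (x y : F) :=
  inP v x y && ~~ inP1 v q a b x y.

(* Write A = 1/a, t = y^(q^a)/x and z = y/x^(q^b), so that u = A - t - z^q.
   Since the q-power map is additive and fixes A, the defining equation
   Tr_b(t) + Tr_a(z) = 1 rearranges to Tr_b(u) = z - A.  At a place, Div(x)
   and Div(y) give v(t) and v(z), and comparing valuations in Tr_b(u) = z - A
   determines v(u): where z - A is a unit or a pole, v(Tr_b u) = q^(b-1) v(u);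
   away from P, Q and V, u is integral and a zero of u would force one of t;
   at P_1, where z = A modulo the place and v(t) = q^c - 1 is prime to q, the
   ultrametric inequality gives v(u) = v(t).  Finally w = t/u. *)

From HB Require Import structures.
From mathcomp Require Import all_boot all_order all_algebra.
From mathcomp Require Import ring zify.
Import Order.TTheory GRing.Theory Num.Theory.
Local Open Scope ring_scope.
Set Implicit Arguments. Unset Strict Implicit.

Section Frobenius.
Variables (F : fieldType) (q : nat).
Hypothesis q_pchar : [pchar F].-nat q.

Lemma pchar_natX i : [pchar F].-nat (q ^ i)%N.
Proof. by rewrite pnatX q_pchar. Qed.

Lemma frobB i (f g : F) : (f - g) ^+ (q ^ i) = f ^+ (q ^ i) - g ^+ (q ^ i).
Proof. by rewrite exprDn_pchar ?exprNn_pchar ?pchar_natX. Qed.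

Lemma frob_natr i k : (k%:R : F) ^+ (q ^ i) = k%:R.
Proof.
elim: k => [|k IHk]; last by rewrite -addn1 natrD exprDn_pchar ?pchar_natX // IHk expr1n.
by rewrite expr0n; case/andP: (pchar_natX i); case: (q ^ i)%N.
Qed.

Lemma frob_natrV i k : ((k%:R : F)^-1) ^+ (q ^ i) = k%:R^-1.
Proof. by rewrite exprVn frob_natr. Qed.

Lemma Tr_frob_relation b (t z : F) : (b.+1%:R : F) != 0 ->
  Tr q b t + Tr q b.+1 z = 1 ->
  Tr q b (b.+1%:R^-1 - t - z ^+ q) = z - b.+1%:R^-1.
Proof.
set A := b.+1%:R^-1 => a_neq0 trace_eq.
have A_mulrn : A *+ b = 1 - A.
  by apply/eqP; rewrite eq_sym subr_eq -mulrSr -mulr_natr mulVf.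
rewrite /Tr (eq_bigr (fun i : 'I_b => A - t ^+ (q ^ i) - z ^+ (q ^ i.+1))) => [|i _].
  move: trace_eq; rewrite /Tr big_ord_recl expn0 expr1 => trace_eq.
  rewrite !sumrB sumr_const card_ord A_mulrn -trace_eq /=; ring.
by rewrite !frobB frob_natrV -exprM -expnS.
Qed.

End Frobenius.

Section Valuation.
Variables (F : fieldType) (K : pred F) (v : dvaluation K).

Lemma dval1 : v 1 = 0.
Proof.
have := vM v (oner_neq0 F) (oner_neq0 F); rewrite mulr1 => v1D.
by apply: (@addrI _ (v 1)); rewrite addr0 -v1D.
Qed.

Lemma dvalN f : f != 0 -> v (- f) = v f.
Proof.
have vN1 : v (-1) = 0.
  have N1_neq0 : (-1 : F) != 0 by rewrite oppr_eq0 oner_neq0.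
  have := vM v N1_neq0 N1_neq0; rewrite mulrNN mulr1 dval1; lia.
by move=> f_neq0; rewrite -mulN1r vM ?oppr_eq0 ?oner_neq0 // vN1 add0r.
Qed.

Lemma dvalV f : f != 0 -> v f^-1 = - v f.
Proof.
move=> f_neq0; have := vM v f_neq0 (invr_neq0 f_neq0).
rewrite mulfV // dval1; lia.
Qed.

Lemma dvalX f n : f != 0 -> v (f ^+ n) = n%:Z * v f.
Proof.
move=> f_neq0; elim: n => [|n IHn]; first by rewrite expr0 dval1 mul0r.
by rewrite exprS vM ?expf_neq0 // IHn -addn1 PoszD; ring.
Qed.

Lemma dval_div f g : f != 0 -> g != 0 -> v (f / g) = v f - v g.
Proof. by move=> f_neq0 g_neq0; rewrite vM ?invr_eq0 // dvalV. Qed.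

Definition vge (f : F) (n : int) := (f == 0) || (n <= v f).

Lemma vgeE f n : f != 0 -> vge f n = (n <= v f).
Proof. by rewrite /vge => /negbTE ->. Qed.

Lemma vge0 n : vge 0 n.
Proof. by rewrite /vge eqxx. Qed.

Lemma vgeD f g n : vge f n -> vge g n -> vge (f + g) n.
Proof.
have [->|f_neq0] := eqVneq f 0; first by rewrite add0r.
have [->|g_neq0] := eqVneq g 0; first by rewrite addr0.
have [->|fg_neq0] := eqVneq (f + g) 0; first by rewrite vge0.
rewrite !vgeE // => le_f le_g.
by case/orP: (vD v f_neq0 g_neq0 fg_neq0) => /(le_trans _)->.
Qed.

Lemma vgeN f n : vge f n -> vge (- f) n.
Proof.
have [->|f_neq0] := eqVneq f 0; first by rewrite oppr0.
by rewrite !vgeE ?oppr_eq0 // dvalN.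
Qed.

Lemma vgeX f n : vge f 0 -> vge (f ^+ n) 0.
Proof.
have [->|f_neq0] := eqVneq f 0.
  by case: n => [|n] _; [rewrite expr0 vgeE ?oner_neq0 ?dval1 | rewrite exprS mul0r vge0].
by rewrite !vgeE ?expf_neq0 // dvalX //; apply: mulr_ge0.
Qed.

Lemma vge_sum (I : Type) (r : seq I) (P : pred I) (G : I -> F) n :
  (forall i, P i -> vge (G i) n) -> vge (\sum_(i <- r | P i) G i) n.
Proof.
by move=> vge_G; apply: (big_ind (fun s => vge s n)) => // [|f g]; [exact: vge0|exact: vgeD].
Qed.

Lemma dvalD_dominant f g : f != 0 -> vge g (v f + 1) ->
  f + g != 0 /\ v (f + g) = v f.
Proof.
move=> f_neq0; have [->|g_neq0] := eqVneq g 0; first by rewrite addr0.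
rewrite vgeE // => lt_fg.
have fg_neq0 : f + g != 0.
  by apply: contraTneq lt_fg => /eqP; rewrite addr_eq0 => /eqP->; rewrite dvalN //; lia.
split=> //; apply/eqP; rewrite eq_le.
have le_f : v f <= v (f + g).
  by case/orP: (vD v f_neq0 g_neq0 fg_neq0) => // /(le_trans _)-> //; lia.
rewrite le_f andbT.
have Ng_neq0 : - g != 0 by rewrite oppr_eq0.
have := vD v fg_neq0 Ng_neq0; rewrite addrK => /(_ f_neq0).
by rewrite dvalN //; case/orP => //; lia.
Qed.

End Valuation.

Section TraceValuation.
Variables (F : fieldType) (K : pred F) (v : dvaluation K) (q : nat).
Hypothesis q_gt1 : (1 < q)%N.

Lemma Tr0 k : Tr q k (0 : F) = 0.
Proof.
by rewrite /Tr big1 // => i _; rewrite expr0n eqn0Ngt expn_gt0 (ltnW q_gt1).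
Qed.

Lemma vge_Tr k f : vge v f 0 -> vge v (Tr q k f) 0.
Proof. by move=> vge_f; apply: vge_sum => i _; apply: vgeX. Qed.

Lemma dval_Tr_gt0 k f : (0 < k)%N -> f != 0 -> 0 < v f ->
  Tr q k f != 0 /\ v (Tr q k f) = v f.
Proof.
case: k => [//|k] _ f_neq0 vf_gt0.
rewrite /Tr big_ord_recl expn0 expr1; apply: dvalD_dominant => //.
apply: vge_sum => i _; rewrite vgeE ?expf_neq0 // dvalX //.
have : (q ^ 1 <= q ^ (bump 0 i))%N by rewrite leq_exp2l //; lia.
rewrite expn1 -lez_nat; move: (q ^ _)%N => N; nia.
Qed.

Lemma dval_Tr_lt0 k f : (0 < k)%N -> f != 0 -> v f < 0 ->
  Tr q k f != 0 /\ v (Tr q k f) = (q ^ k.-1)%N%:Z * v f.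
Proof.
case: k => [//|k] _ f_neq0 vf_lt0.
rewrite /Tr big_ord_recr /= addrC -dvalX //; apply: dvalD_dominant; first by rewrite expf_neq0.
apply: vge_sum => i _; rewrite vgeE ?expf_neq0 // !dvalX //.
have : (q ^ i < q ^ k)%N by rewrite ltn_exp2l.
rewrite -ltz_nat; move: (q ^ i)%N (q ^ k)%N => M N; nia.
Qed.

Lemma dval_Tr_le0 k f : (0 < k)%N -> Tr q k f != 0 -> v (Tr q k f) <= 0 ->
  v (Tr q k f) = (q ^ k.-1)%N%:Z * v f.
Proof.
move=> k_gt0 Tr_neq0 vTr_le0.
have f_neq0 : f != 0 by apply: contraNneq Tr_neq0 => ->; rewrite Tr0.
case: (ltgtP (v f) 0) => [vf_lt0|vf_gt0|vf0].
- by case: (dval_Tr_lt0 k_gt0 f_neq0 vf_lt0).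
- by case: (dval_Tr_gt0 k_gt0 f_neq0 vf_gt0) => _ vTr; move: vTr_le0; rewrite vTr; lia.
- have : vge v (Tr q k f) 0 by apply: vge_Tr; rewrite vgeE // vf0.
  by rewrite vgeE // vf0 mulr0 => vTr_ge0; apply/eqP; rewrite eq_le vTr_le0.
Qed.

End TraceValuation.

Section TraceEquation.
Variables (F : fieldType) (K : pred F) (v : dvaluation K) (q b : nat) (A t z : F).
Hypotheses (q_gt1 : (1 < q)%N) (b_gt0 : (0 < b)%N).
Hypotheses (A_neq0 : A != 0) (vA : v A = 0) (A_frob : A ^+ q = A).
Hypothesis frobqB : forall f g : F, (f - g) ^+ q = f ^+ q - g ^+ q.
Let u := A - t - z ^+ q.
Hypothesis Tr_u : Tr q b u = z - A.

Let expr0q : (0 : F) ^+ q = 0.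
Proof. by rewrite -(prednK (ltnW q_gt1)) exprS mul0r. Qed.

Lemma u_frobE : u = - (z - A) ^+ q - t.
Proof. by rewrite /u frobqB A_frob; ring. Qed.

Lemma dval_u_le0 : z - A != 0 -> v (z - A) <= 0 ->
  u != 0 /\ (q ^ b.-1)%N%:Z * v u = v (z - A).
Proof.
move=> zA_neq0 vzA_le0; split.
  by apply: contraNneq zA_neq0 => u0; rewrite -Tr_u u0 (Tr0 _ q_gt1).
by rewrite -Tr_u (dval_Tr_le0 q_gt1 b_gt0) // Tr_u.
Qed.

Lemma dval_u_integral : t != 0 -> v t = 0 -> vge v z 0 -> u != 0 /\ v u = 0.
Proof.
move=> t_neq0 vt0 vge_z.
have vge_u : vge v u 0.
  apply: vgeD; last by apply/vgeN/vgeX.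
  by apply: vgeD; [rewrite vgeE // vA | apply: vgeN; rewrite vgeE // vt0].
have u_neq0 : u != 0.
  apply: contra_neq t_neq0 => u0; move: (Tr_u) (u_frobE).
  rewrite u0 (Tr0 _ q_gt1) => /esym/eqP; rewrite subr_eq0 => /eqP<-.
  by rewrite subrr expr0q oppr0 sub0r => /esym/eqP; rewrite oppr_eq0 => /eqP.
split=> //; move: vge_u; rewrite vgeE // le_eqVlt => /orP[/eqP<- // | vu_gt0].
have [zA_neq0 vzA] := dval_Tr_gt0 q_gt1 b_gt0 u_neq0 vu_gt0; rewrite Tr_u in zA_neq0 vzA.
have : vge v t 1.
  rewrite (_ : t = - (z - A) ^+ q - u); last by rewrite u_frobE; ring.
  apply: vgeD; apply: vgeN; rewrite vgeE ?expf_neq0 // ?dvalX // vzA; nia.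
by rewrite vgeE // vt0.
Qed.

(* As [q] does not divide [v t], the two terms of [u = - (z - A) ^+ q - t]
   have distinct valuations; [(z - A) ^+ q] cannot be the dominant one, for
   then [v (Tr q b u) = v u = q * v (z - A)] would exceed [v (z - A)]. *)
Lemma dval_u_residue : t != 0 -> 0 < v t -> ~~ (q%:Z %| v t)%Z ->
  residue_is v z A -> u != 0 /\ v u = v t.
Proof.
move=> t_neq0 vt_gt0 q_ndvd_vt; rewrite /residue_is.
have Nt_neq0 : - t != 0 by rewrite oppr_eq0.
have [zA0 _ | zA_neq0 /= vzA_gt0] := eqVneq (z - A) 0.
  have uE : u = - t by rewrite u_frobE zA0 expr0q oppr0 sub0r.
  have u_neq0 : u != 0 by rewrite uE.
  have vu_gt0 : 0 < v u by rewrite uE dvalN.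
  by have [] := dval_Tr_gt0 q_gt1 b_gt0 u_neq0 vu_gt0; rewrite Tr_u zA0 eqxx.
have zAq_neq0 : - (z - A) ^+ q != 0 by rewrite oppr_eq0 expf_neq0.
have vzAq : v (- (z - A) ^+ q) = q%:Z * v (z - A) by rewrite dvalN ?expf_neq0 // dvalX.
have vt_neq : v t != q%:Z * v (z - A).
  by apply: contraNneq q_ndvd_vt => ->; apply/dvdz_mulr/dvdzz.
have vt_lt : v t < q%:Z * v (z - A).
  rewrite lt_neqAle vt_neq /= leNgt; apply/negP => vt_gt.
  have [u_neq0 vu] : u != 0 /\ v u = q%:Z * v (z - A).
    rewrite u_frobE -vzAq; apply: dvalD_dominant => //.
    by rewrite vgeE // vzAq dvalN //; lia.
  have vu_gt0 : 0 < v u by rewrite vu; nia.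
  have [_] := dval_Tr_gt0 q_gt1 b_gt0 u_neq0 vu_gt0.
  by rewrite Tr_u vu; nia.
rewrite u_frobE addrC -(dvalN v t_neq0); apply: dvalD_dominant => //.
by rewrite vgeE // vzAq dvalN //; lia.
Qed.

End TraceEquation.

Section Geometric.
Variable q : nat.
Hypothesis q_gt1 : (1 < q)%N.
Local Open Scope nat_scope.

Lemma NqE k : Nq q k = \sum_(i < k) q ^ i.
Proof.
suff mulE : q ^ k - 1 = (\sum_(i < k) q ^ i) * (q - 1) by rewrite /Nq mulE mulnK // subn_gt0.
elim: k => [|k IHk]; first by rewrite big_ord0 expn0.
rewrite big_ord_recr /= mulnDl -IHk expnS.
have : 0 < q ^ k by rewrite expn_gt0 ltnW.
move: (q ^ k) => Q; nia.
Qed.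

Lemma Nq_gt0 k : 0 < k -> 0 < Nq q k.
Proof. by case: k => // k _; rewrite NqE big_ord_recl expn0. Qed.

Lemma NqD m n : Nq q (m + n) = Nq q m + q ^ m * Nq q n.
Proof.
rewrite !NqE big_split_ord /= big_distrr /=; congr (_ + _).
by apply: eq_bigr => i _; rewrite expnD.
Qed.

End Geometric.

Section Divisors.
Variables (F : fieldType) (K : pred F) (q b : nat) (x y : F).
Hypotheses (q_gt1 : (1 < q)%N) (b_gt0 : (0 < b)%N) (q_pchar : [pchar F].-nat q).
Let a := b.+1.
Let c := (a + b)%N.
Let A : F := a%:R^-1.
Hypotheses (a_neq0 : (a%:R : F) != 0) (A_const : K A).
Let t := y ^+ (q ^ a) / x.
Let z := y / x ^+ (q ^ b).
Hypothesis trace_eq : Tr q b t + Tr q a z = 1.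
Let u := A - t - y ^+ q / x ^+ (q ^ a).
Let w := y ^+ (q ^ a) / (x * u).

Lemma trace_eq_neq0 : (x != 0) && (y != 0).
Proof.
rewrite -negb_or; apply/negP => /orP xy0.
have [t0 z0] : t = 0 /\ z = 0.
  have qn0 n : (q ^ n == 0)%N = false by rewrite eqn0Ngt expn_gt0 ltnW.
  by rewrite /t /z; case: xy0 => /eqP->; rewrite ?expr0n ?qn0 ?invr0 !(mulr0, mul0r).
move: trace_eq; rewrite t0 z0 !(Tr0 _ q_gt1) addr0 => /eqP.
by rewrite eq_sym oner_eq0.
Qed.

Let x_neq0 : x != 0 := (andP trace_eq_neq0).1.
Let y_neq0 : y != 0 := (andP trace_eq_neq0).2.
Let A_neq0 : A != 0 := invr_neq0 a_neq0.
Let t_neq0 : t != 0. Proof. by rewrite mulf_neq0 ?invr_eq0 ?expf_neq0. Qed.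
Let z_neq0 : z != 0. Proof. by rewrite mulf_neq0 ?invr_eq0 ?expf_neq0. Qed.

Let Q := (q ^ b.-1)%N.
Let expbE : (q ^ b = q * Q)%N. Proof. by rewrite -expnS prednK. Qed.
Let Q_neq0 : Q%:Z != 0. Proof. by rewrite eqz_nat expn_eq0 negb_and -lt0n ltnW. Qed.

Let qc1E : (q ^ c - 1)%N%:Z = (q ^ a)%N%:Z * (q ^ b)%N%:Z - 1.
Proof. by rewrite -subzn ?expn_gt0 ?(ltnW q_gt1) // /c expnD PoszM. Qed.

Let qc_gt1 : (1 < q ^ c)%N.
Proof. by rewrite -[1%N](expn0 q) ltn_exp2l. Qed.

Let q_ndvd_qc1 : ~~ (q%:Z %| (q ^ c - 1)%N%:Z)%Z.
Proof.
rewrite dvdzE /= dvdn_subr ?dvdn_exp ?dvdn1 ?(ltnW qc_gt1) //.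
by rewrite neq_ltn q_gt1 orbT.
Qed.

Let uE : u = A - t - z ^+ q.
Proof. by rewrite /u /z expr_div_n -exprM -expnSr. Qed.

Let A_frob : A ^+ q = A.
Proof. by rewrite -[in LHS](expn1 q) frob_natrV. Qed.

Let frobqB (f g : F) : (f - g) ^+ q = f ^+ q - g ^+ q.
Proof. by rewrite -(expn1 q) frobB. Qed.

Let Tr_u : Tr q b (A - t - z ^+ q) = z - A.
Proof. exact: Tr_frob_relation. Qed.

Variable v : dvaluation K.

Let dval_A : v A = 0.
Proof. by rewrite vK // invr_eq0. Qed.

Lemma dval_z : v z = v y - (q ^ b)%N%:Z * v x.
Proof. by rewrite dval_div ?expf_neq0 // dvalX. Qed.

Lemma dval_t : v t = (q ^ a)%N%:Z * v y - v x.
Proof. by rewrite dval_div ?expf_neq0 // dvalX. Qed.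

Lemma dval_w : u != 0 -> v w = v t - v u.
Proof. by move=> u_neq0; rewrite /w invfM mulrA -/t dval_div. Qed.

Lemma dval_u_of_unit : z - A != 0 -> v (z - A) = 0 -> u != 0 /\ v u = 0.
Proof.
move=> zA_neq0 vzA0; rewrite uE.
have vzA_le0 : v (z - A) <= 0 by rewrite vzA0.
have [u_neq0 vu] := dval_u_le0 q_gt1 b_gt0 Tr_u zA_neq0 vzA_le0.
by split=> //; apply: (mulfI Q_neq0); rewrite mulr0 vu vzA0.
Qed.

Lemma divisors_at_P1 : v x = 1 -> v y = (q ^ b)%N%:Z -> residue_is v z A ->
  [/\ v u = (q ^ c - 1)%N%:Z, v z = 0 & v w = 0].
Proof.
move=> vx vy res.
have vz : v z = 0 by rewrite dval_z vx vy mulr1 subrr.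
have vt : v t = (q ^ c - 1)%N%:Z by rewrite dval_t vx vy qc1E.
have vt_gt0 : 0 < v t by rewrite vt ltz_nat subn_gt0 qc_gt1.
have q_ndvd_vt : ~~ (q%:Z %| v t)%Z by rewrite vt q_ndvd_qc1.
have [u_neq0 vu] := dval_u_residue q_gt1 b_gt0 A_neq0 dval_A A_frob frobqB Tr_u
  t_neq0 vt_gt0 q_ndvd_vt res.
by rewrite -uE in u_neq0 vu; rewrite dval_w // vu vt subrr.
Qed.

Lemma divisors_at_P0 : v x = 1 -> v y = (q ^ b)%N%:Z -> ~~ residue_is v z A ->
  [/\ v u = 0, v z = 0 & v w = (q ^ c - 1)%N%:Z].
Proof.
move=> vx vy; rewrite /residue_is negb_or => /andP[zA_neq0 vzA_le0].
have vz : v z = 0 by rewrite dval_z vx vy mulr1 subrr.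
have vzA : v (z - A) = 0.
  have : vge v (z - A) 0 by apply: vgeD; [rewrite vgeE ?vz|apply/vgeN; rewrite vgeE ?dval_A].
  by rewrite vgeE // le_eqVlt (negbTE vzA_le0) orbF => /eqP.
have [u_neq0 vu] := dval_u_of_unit zA_neq0 vzA.
by rewrite dval_w // vu dval_t vx vy qc1E subr0.
Qed.

Lemma divisors_at_Q : v x = - (q ^ a)%N%:Z -> v y = -1 ->
  [/\ v u = 0, v z = (q ^ c - 1)%N%:Z & v w = 0].
Proof.
move=> vx vy.
have vz : v z = (q ^ c - 1)%N%:Z by rewrite dval_z vx vy qc1E; ring.
have [Az_neq0 vAz] : - A + z != 0 /\ v (- A + z) = v (- A).
  apply: dvalD_dominant; rewrite ?oppr_eq0 // vgeE // vz dvalN // dval_A.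
  by rewrite add0r lez_nat subn_gt0 qc_gt1.
rewrite addrC dvalN // dval_A in Az_neq0 vAz.
have [u_neq0 vu] := dval_u_of_unit Az_neq0 vAz.
by rewrite dval_w // vu dval_t vx vy; split=> //; ring.
Qed.

Lemma divisors_at_V :
  v x = (q ^ a.-1 * Nq q b)%N%:Z -> v y = - (q ^ b.-1 * Nq q a)%N%:Z ->
  [/\ v u = - (Nq q c)%:Z, v z = - (q ^ b.-1 * Nq q c)%N%:Z
    & v w = - ((q ^ a.-1 - 1) * Nq q c)%N%:Z].
Proof.
move=> vx vy.
have NcE : Nq q c = (Nq q a + q ^ a * Nq q b)%N by rewrite NqD.
have NcE' : Nq q c = (Nq q b + q ^ b * Nq q a)%N by rewrite /c addnC NqD.
have vz : v z = - (Q * Nq q c)%N%:Z.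
  by rewrite dval_z vx vy NcE /= expnS expbE !(PoszM, PoszD); ring.
have vz_lt0 : v z < 0 by rewrite vz oppr_lt0 ltz_nat muln_gt0 expn_gt0 (ltnW q_gt1) Nq_gt0.
have [zA_neq0 vzA] : z + - A != 0 /\ v (z + - A) = v z.
  by apply: dvalD_dominant; rewrite // vgeE ?oppr_eq0 // dvalN // dval_A; lia.
have vzA_le0 : v (z - A) <= 0 by rewrite vzA ltW.
have [u_neq0 vu] := dval_u_le0 q_gt1 b_gt0 Tr_u zA_neq0 vzA_le0.
rewrite -uE in u_neq0 vu.
have {}vu : v u = - (Nq q c)%:Z by apply: (mulfI Q_neq0); rewrite vu vzA vz PoszM; ring.
split=> //; rewrite dval_w // vu dval_t vx vy NcE' /= !PoszM -subzn ?expn_gt0 ?(ltnW q_gt1) //.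
by rewrite expnS expbE !(PoszM, PoszD); ring.
Qed.

Lemma divisors_elsewhere : v x = 0 -> v y = 0 -> [/\ v u = 0, v z = 0 & v w = 0].
Proof.
move=> vx vy.
have vz : v z = 0 by rewrite dval_z vx vy; ring.
have vt : v t = 0 by rewrite dval_t vx vy; ring.
have vge_z : vge v z 0 by rewrite vgeE // vz.
have [u_neq0 vu] := dval_u_integral q_gt1 b_gt0 A_neq0 dval_A A_frob frobqB Tr_u
  t_neq0 vt vge_z.
by rewrite -uE in u_neq0 vu; rewrite dval_w // vu vt subr0.
Qed.

Lemma divisors_uzw :
  v x = ind (inP v x y) + ((q ^ a.-1 * Nq q b)%N)%:Z * ind (inV v x y)
        - (q ^ a)%N%:Z * ind (inQ v x y) ->
  v y = (q ^ b)%N%:Z * ind (inP v x y) - ((q ^ b.-1 * Nq q a)%N)%:Z * ind (inV v x y)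
        - ind (inQ v x y) ->
  [/\ v u = (q ^ c - 1)%N%:Z * ind (inP1 v q a b x y) - (Nq q c)%:Z * ind (inV v x y),
      v z = - ((q ^ b.-1 * Nq q c)%N)%:Z * ind (inV v x y)
            + (q ^ c - 1)%N%:Z * ind (inQ v x y)
    & v w = (q ^ c - 1)%N%:Z * ind (inP0 v q a b x y)
            - ((q ^ a.-1 - 1) * Nq q c)%N%:Z * ind (inV v x y)].
Proof.
rewrite /inP0 /inP1 /inP /inQ /inV.
case: (ltgtP (v x) 0) => _; case: (ltgtP (v y) 0) => _ /= vx vy.
all: rewrite /ind /= !(mulr0, mulr1, oppr0, addr0, subr0, add0r, sub0r) in vx vy *.
all: try exact: divisors_elsewhere vx vy.
- exact: divisors_at_Q vx vy.
- exact: divisors_at_V vx vy.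
- case: (boolP (residue_is v z A)) => res /=; rewrite ?mulr1 ?mulr0.
  + exact: divisors_at_P1 vx vy res.
  + exact: divisors_at_P0 vx vy res.
Qed.

End Divisors.

Unset Implicit Arguments.
Set Strict Implicit.

Theorem proposition3 (p e b : nat) (F : fieldType) (x y : F) :
  let q := (p ^ e)%N in
  let a := b.+1 in
  let c := (a + b)%N in
  let K := @Fsub F (q ^ c) in
  prime p -> (0 < e)%N -> (0 < b)%N -> p \in [pchar F] ->
  generated_by K x y ->
  Tr q b (y ^+ (q ^ a) / x) + Tr q a (y / x ^+ (q ^ b)) = 1 ->
  (forall v : dvaluation K,
     v x = ind (inP v x y) + ((q ^ a.-1 * Nq q b)%N)%:Z * ind (inV v x y)
           - (q ^ a)%N%:Z * ind (inQ v x y)) ->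
  (forall v : dvaluation K,
     v y = (q ^ b)%N%:Z * ind (inP v x y) - ((q ^ b.-1 * Nq q a)%N)%:Z * ind (inV v x y)
           - ind (inQ v x y)) ->
  ~~ (p %| a)%N ->
  let u := (a%:R)^-1 - y ^+ (q ^ a) / x - y ^+ q / x ^+ (q ^ a) in
  let w := y ^+ (q ^ a) / (x * u) in
  let z := y / x ^+ (q ^ b) in
  [/\ forall v : dvaluation K,
        v u = (q ^ c - 1)%N%:Z * ind (inP1 v q a b x y) - (Nq q c)%:Z * ind (inV v x y),
      forall v : dvaluation K,
        v z = - ((q ^ b.-1 * Nq q c)%N)%:Z * ind (inV v x y)
              + (q ^ c - 1)%N%:Z * ind (inQ v x y)
    & forall v : dvaluation K,
        v w = (q ^ c - 1)%N%:Z * ind (inP0 v q a b x y)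
              - ((q ^ a.-1 - 1) * Nq q c)%N%:Z * ind (inV v x y)].
Proof.
move=> q a c K p_prime e_gt0 b_gt0 p_char _ trace_eq vx vy p_ndvd_a u w z.
have q_gt1 : (1 < q)%N by rewrite -(expn0 p) ltn_exp2l ?prime_gt1.
have q_pchar : [pchar F].-nat q by rewrite pnatX (eq_pnat _ (pcharf_eq p_char)) pnat_id.
have a_neq0 : (a%:R : F) != 0 by rewrite -(dvdn_pcharf p_char).
have A_const : K a%:R^-1 by rewrite /K /Fsub frob_natrV.
have divisors := divisors_uzw q_gt1 b_gt0 q_pchar a_neq0 A_const trace_eq.
by split=> v; case: (divisors v (vx v) (vy v)).
Qed.
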